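(* Let $(G,\rho)$ have vertices $v,w$ and edges $a_1,\dots,a_5$, each joining $v$ and $w$, with $\rho_v=(a_1,a_2,a_3,a_4,a_5)$ and $\rho_w=(a_1,a_3,a_2,a_5,a_4)$. Let $(G',\rho')$ have the same vertices $v,w$ and edges $b_1,\dots,b_5$, each joining $v$ and $w$, with $\rho'_v=(b_1,b_4,b_2,b_5,b_3)$ and $\rho'_w=(b_1,b_5,b_3,b_4,b_2)$. Let $\varphi:\mathcal T(G)\to\mathcal T(G')$ send the tree $\{a_i\}$ to $\{b_i\}$, and let $\gamma:\operatorname{Pic}^0(G)\to\operatorname{Pic}^0(G')$ send the class of $n v-n w$ to the class of $2nv-2nw$ (an isomorphism since both groups are $\mathbb Z/5\mathbb Z$). Then for every vertex $u\in\{v,w\}$ and for $\alpha$ either the rotor routing process or the Bernardi process, $\varphi(\alpha_u^{G}(S,T))=\alpha_u^{G'}(\gamma(S),\varphi(T))$ for all $S\in\operatorname{Pic}^0(G)$, $T\in\mathcal T(G)$. However, the genus of $(G,\rho)$ is $1$ while the genus of $(G',\rho')$ is $2$.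
   Context: A ribbon graph $(G,\rho)$ is a finite connected loopless multigraph with, for each vertex $u$, a cyclic order $\rho_u$ on the edges at $u$. $\mathcal T(G)$ is the set of spanning trees (here each single edge). $\operatorname{Pic}^0(G)$ is the group of degree-zero integer chip configurations modulo firings (firing $u$ sends one chip from $u$ along each incident edge); $\operatorname{Pic}^k$ likewise for degree $k$. Rotor routing torsor $r_u$: for $S\in\operatorname{Pic}^0$, $T\in\mathcal T$, take a representative of $S$ nonnegative away from $u$; orient $T$ towards $u$, giving each other vertex an outgoing edge (rotor); while some vertex $x\ne u$ has positive chips, advance its rotor to the next edge in $\rho_x$ and send a chip along it; when all vertices other than $u$ have zero chips, the rotors form $r_u(S,T)$. Bernardi torsor $\beta_u$: with half-edges $(e,x)$, for $T$ start at $(e_0,u)$ for a fixed edge $e_0$ at $u$; at $(e',x')$: if $e'\in T$ with other endpoint $y$, move to $(e'',y)$ with $e''$ following $e'$ in $\rho_y$; if $e'\notin T$, move to $(\tilde e,x')$ with $\tilde e$ following $e'$ in $\rho_{x'}$ and place a chip on $x'$ if the other half-edge of $e'$ has not yet been visited. Stop on returning to $(e_0,u)$. The divisors $D_T$ (degree $|E|-|V|+1$) give a bijection of $\mathcal T$ with $\operatorname{Pic}^{|E|-|V|+1}$, and $\beta_u(S,T)$ is the unique $T'$ with $[D_{T'}]=[D_T]+S$. Genus: a cycle is a closed walk which, entering a vertex $x$ along $e$, leaves along the edge following $e$ in $\rho_x$; the genus $g$ satisfies $2g=2-|V|+|E|-\operatorname{cyc}(G,\rho)$, where $\operatorname{cyc}$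 is the number of cycles. *)

From mathcomp Require Import all_boot all_order all_algebra.
Set Implicit Arguments. Unset Strict Implicit. Unset Printing Implicit Defensive.
Import GRing.Theory Num.Theory.
Local Open Scope ring_scope.

(** * Ribbon graphs
    A ribbon graph on vertex type [V] and edge type [E]: each edge [e] has
    endpoints [rend1 e] and [rend2 e]; [rrot x] lists the edges at [x] in the
    cyclic order rho_x (the successor of [e] is [next (rrot x) e], wrapping
    around). *)
Record ribbon (V E : finType) := Ribbon {
  rend1 : E -> V;
  rend2 : E -> V;
  rrot : V -> seq E }.

Section Ribbon.
Variables (V E : finType) (G : ribbon V E).

Definition incident (e : E) (x : V) : bool := (rend1 G e == x) || (rend2 G e == x).

Definition other_end (e : E) (x : V) : V :=
  if rend1 G e == x then rend2 G e else rend1 G e.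

Definition rsucc (x : V) (e : E) : E := next (rrot G x) e.

Definition ribbon_wf : Prop :=
  (forall e, rend1 G e != rend2 G e) /\
  (forall x, uniq (rrot G x) /\ forall e, (e \in rrot G x) = incident e x).

Definition adjT (T : {set E}) : rel V :=
  fun x y => [exists e in T, incident e x && (other_end e x == y) && (x != y)].

Definition spanning_tree (T : {set E}) : bool :=
  (#|T| == #|V|.-1)%N && [forall x, forall y, connect (adjT T) x y].

Definition divisor := {ffun V -> int}.

Definition deg (D : divisor) : int := \sum_(x : V) D x.

(** [lap z] = effect of firing each vertex x exactly (z x) times (with sign):
    (lap z) x = sum over edges e at x of (z x - z (other end)). *)
Definition lap (z : {ffun V -> int}) : divisor :=
  [ffun x => \sum_(e : E | incident e x) (z x - z (other_end e x))].

Definition lin_equiv (D D' : divisor) : Prop :=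
  exists z : {ffun V -> int}, D' = [ffun x => D x - lap z x].

Definition rotors := {ffun V -> E}.

(** [rho] is the rotor configuration obtained by orienting the tree [T]
    towards [u]: every x <> u points along an edge of T at x, and following
    the rotors from any vertex leads to u. *)
Definition rotors_of_tree (u : V) (T : {set E}) (rho : rotors) : Prop :=
  (forall x, x != u -> (rho x \in T) && incident (rho x) x) /\
  (forall x, exists n, iter n (fun y => if y == u then u else other_end (rho y) y) x = u).

Definition rr_step (u : V) (s s' : divisor * rotors) : Prop :=
  exists x, [/\ x != u, 0 < s.1 x &
    (let e := rsucc x (s.2 x) in
     let y := other_end e x in
     s' = ([ffun z => s.1 z - (z == x)%:Z + (z == y)%:Z],
           [ffun z => if z == x then e else s.2 z]))].

Inductive rr_reach (u : V) : divisor * rotors -> divisor * rotors -> Prop :=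
| rr_refl s : rr_reach u s s
| rr_trans s s' s'' : rr_step u s s' -> rr_reach u s' s'' -> rr_reach u s s''.

(** [rr_torsor u D T T'] : r_u([D], T) = T'. *)
Definition rr_torsor (u : V) (D : divisor) (T T' : {set E}) : Prop :=
  exists D0 rho0 Dend rhoend,
    [/\ lin_equiv D D0 /\ (forall x, x != u -> 0 <= D0 x),
        rotors_of_tree u T rho0,
        rr_reach u (D0, rho0) (Dend, rhoend),
        (forall x, x != u -> Dend x = 0) &
        T' = [set rhoend x | x in [set x | x != u]]].

(** a half-edge is a pair (e, x) *)
Definition bstep (T : {set E}) (h : E * V) : E * V :=
  let: (e, x) := h in
  if e \in T then let y := other_end e x in (rsucc y e, y)
  else (rsucc x e, x).

Definition btour (u : V) (e0 : E) (T : {set E}) : seq (E * V) :=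
  orbit (bstep T) (e0, u).

Definition bdiv (u : V) (e0 : E) (T : {set E}) : divisor :=
  let t := btour u e0 T in
  [ffun z => (\sum_(i < size t)
     let h := nth (e0, u) t i in
     [&& h.1 \notin T, h.2 == z &
         (h.1, other_end h.1 h.2) \notin take i t])%:Z].

(** [bern_torsor u e0 D T T'] : beta_u([D], T) = T', i.e. T' is a spanning
    tree with [D_T'] = [D_T] + [D]. *)
Definition bern_torsor (u : V) (e0 : E) (D : divisor) (T T' : {set E}) : Prop :=
  spanning_tree T' /\ lin_equiv [ffun x => bdiv u e0 T x + D x] (bdiv u e0 T').

Definition darts : {set E * V} := [set d | incident d.1 d.2].

(** entering x along e, leave along the edge following e in rho_x *)
Definition face_step (d : E * V) : E * V :=
  let: (e, x) := d in let e' := rsucc x e in (e', other_end e' x).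

Definition cyc : nat :=
  size (undup [seq [set d' | fconnect face_step d d'] | d <- enum darts]).

Definition has_genus (g : int) : Prop :=
  2 * g = 2 - (#|V|)%:Z + (#|E|)%:Z - (cyc)%:Z.

End Ribbon.

(** vertices: v = 0, w = 1; edges a_i (resp. b_i) = i-1 *)
Definition vv : 'I_2 := @Ordinal 2 0 isT.
Definition ww : 'I_2 := @Ordinal 2 1 isT.
Definition ed (i : nat) : 'I_5 := inord i.

Definition Gprop : ribbon 'I_2 'I_5 :=
  Ribbon (fun _ => vv) (fun _ => ww)
    (fun x => if x == vv then [:: ed 0; ed 1; ed 2; ed 3; ed 4]
              else [:: ed 0; ed 2; ed 1; ed 4; ed 3]).

Definition G'prop : ribbon 'I_2 'I_5 :=
  Ribbon (fun _ => vv) (fun _ => ww)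
    (fun x => if x == vv then [:: ed 0; ed 3; ed 1; ed 4; ed 2]
              else [:: ed 0; ed 4; ed 2; ed 3; ed 1]).

Definition phi (T : {set 'I_5}) : {set 'I_5} := [set i : 'I_5 | i \in T].

(** gamma : class of n v - n w |-> class of 2n v - 2n w; a degree-zero
    divisor D on {v, w} equals n v - n w with n = D v. *)
Definition gamma (D : {ffun 'I_2 -> int}) : {ffun 'I_2 -> int} :=
  [ffun x => if x == vv then 2 * D vv else - (2 * D vv)].

From mathcomp Require Import all_boot all_order all_algebra zify ring lra.
Import GRing.Theory Num.Theory.
Local Open Scope ring_scope.
Set Implicit Arguments. Unset Strict Implicit. Unset Printing Implicit Defensive.

(* Both ribbon graphs have two vertices joined by five parallel edges, so the
   spanning trees are the single edges {t}, and since a firing moves five chips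
   across, a degree-zero divisor D is determined in Pic^0 by D(v) mod 5.
   Rotor routing towards u only ever fires the other vertex x, each firing turning
   the rotor at x one step along rho_x; hence r_u(D, {t}) = {rho_x^k t} with
   k = D(x) mod 5.  At both vertices rho'_x o rho'_x = rho_x, so doubling the
   chips in G' reaches the same edge.
   The Bernardi torsor sends ({t}, D) to the {t'} with D_t'(v) = D_t(v) + D(v)
   mod 5 (all D_t have degree 4); computing the 50 tours of each graph shows that
   t |-> D_t(v) hits every residue and that D'_t(v) - 2 D_t(v) mod 5 does not
   depend on t.  Finally G has 3 faces and G' has 1, whence genera 1 and 2. *)

Section Orbits.
Variables (T : finType) (f : T -> T).

Lemma orbit_traject x n :
  (0 < n)%N -> iter n f x = x -> uniq (traject f x n) -> orbit f x = traject f x n.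
Proof.
case: n => // n _ fx_n uniq_p.
have cycle_p : fcycle f (traject f x n.+1).
  rewrite trajectS /=; have -> : rcons (traject f (f x) n) x = traject f (f x) n.+1.
    by rewrite trajectSr -iterSr fx_n.
  exact: fpath_traject.
rewrite (orbitE cycle_p uniq_p) ?trajectS ?mem_head //=.
by rewrite eqxx rot0.
Qed.

Lemma fconnect_traject x y n : (#|T| <= n)%N -> fconnect f x y = (y \in traject f x n).
Proof.
move=> leTn; apply/idP/idP => [|/trajectP[i _ ->]]; last exact: fconnect_iter.
have le_order : (order f x <= n)%N := leq_trans (max_card _) leTn.
by rewrite fconnect_orbit -(subnKC le_order) trajectD mem_cat => ->.
Qed.

Lemma iter_next_size (p : seq T) y : uniq p -> iter (size p) (next p) y = y.
Proof.
move=> uniq_p; have [p_y | pNy] := boolP (y \in p).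
  rewrite -(order_cycle (cycle_next uniq_p) uniq_p p_y).
  exact: (iter_order_cycle (cycle_next uniq_p)).
by elim: (size p) => //= n ->; rewrite next_nth (negbTE pNy).
Qed.
End Orbits.

Lemma eq_traject (T : Type) (f g : T -> T) : f =1 g -> traject f =2 traject g.
Proof. by move=> eq_fg x n; elim: n x => //= n IH x; rewrite IH eq_fg. Qed.

Lemma iter_modn (T : Type) (f : T -> T) n :
  (forall x, iter n f x = x) -> forall m x, iter m f x = iter (m %% n) f x.
Proof.
move=> periodic m x; rewrite {1}(divn_eq m n) iterD.
by elim: (m %/ n)%N => // q IH; rewrite mulSn iterD periodic.
Qed.

Lemma size_undup_map_eq (A B C : eqType) (g : A -> B) (h : A -> C) (s : seq A) :
  {in s &, forall x y, (g x == g y) = (h x == h y)} ->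
  size (undup (map g s)) = size (undup (map h s)).
Proof.
elim: s => //= x s IH eq_gh.
have eq_gh_s : {in s &, forall x y, (g x == g y) = (h x == h y)}.
  by move=> y z sy sz; apply: eq_gh; rewrite inE ?sy ?sz orbT.
have -> : (g x \in map g s) = (h x \in map h s).
  apply/mapP/mapP => -[y sy /eqP]; [rewrite eq_gh | rewrite -eq_gh];
    rewrite ?inE ?eqxx ?sy ?orbT // => /eqP; by exists y.
by case: (h x \in map h s); rewrite /= IH.
Qed.

Lemma deg_add (V : finType) (A B : divisor V) :
  deg [ffun x => A x + B x] = deg A + deg B.
Proof. by rewrite /deg -big_split; apply: eq_bigr => x _; rewrite ffunE. Qed.

Section BernardiSingleEdge.
Variables (V E : finType) (G : ribbon V E) (t : E).

Definition bstep1 (h : E * V) : E * V :=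
  let: (e, x) := h in
  if e == t then let y := other_end G e x in (rsucc G y e, y) else (rsucc G x e, x).

Lemma bstep_set1 : bstep G [set t] =1 bstep1.
Proof. by case=> e x; rewrite /= in_set1. Qed.

Definition tour_chips (u : V) (e0 : E) (s : seq (E * V)) (z : V) : nat :=
  count (fun i => let h := nth (e0, u) s i in
           [&& h.1 != t, h.2 == z & (h.1, other_end G h.1 h.2) \notin take i s])
        (iota 0 (size s)).

Lemma bdiv_set1 u e0 n z :
  (0 < n)%N -> iter n bstep1 (e0, u) = (e0, u) -> uniq (traject bstep1 (e0, u) n) ->
  bdiv G u e0 [set t] z = (tour_chips u e0 (traject bstep1 (e0, u) n) z)%:Z.
Proof.
move=> n_gt0 closed uniq_tour.
have tourE : btour G u e0 [set t] = traject bstep1 (e0, u) n.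
  rewrite /btour -(eq_traject bstep_set1) (orbit_traject n_gt0) //.
    by rewrite (eq_iter bstep_set1).
  by rewrite (eq_traject bstep_set1).
rewrite /bdiv ffunE tourE /tour_chips; move: (traject _ _ _) => s.
have -> : iota 0 (size s) = index_iota 0 (size s) by rewrite /index_iota subn0.
congr Posz; rewrite -sum1_count big_mkord [RHS]big_mkcond.
by apply: eq_bigr => i _; rewrite in_set1; case: ifP.
Qed.
End BernardiSingleEdge.

Definition vflip (x : 'I_2) : 'I_2 := if x == vv then ww else vv.

Lemma vertexP (x : 'I_2) : x = vv \/ x = ww.
Proof. by case: x => [[|[|m]] p] //; [left | right]; apply: val_inj. Qed.

Lemma vflip_neq x : vflip x != x. Proof. by case: (vertexP x) => ->. Qed.

Lemma neq_vflip y x : y != x -> y = vflip x.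
Proof. by case: (vertexP y) => ->; case: (vertexP x) => ->. Qed.

Lemma vflipK : involutive vflip. Proof. by move=> x; case: (vertexP x) => ->. Qed.

Lemma degE2 (D : divisor 'I_2) : deg D = D vv + D ww.
Proof.
rewrite /deg !big_ord_recl big_ord0 addr0.
by congr (D _ + D _); apply: val_inj.
Qed.

Section Banana.
Variables (E : finType) (rot : 'I_2 -> seq E).

Definition banana : ribbon 'I_2 E := Ribbon (fun _ => vv) (fun _ => ww) rot.

Lemma incident_banana e x : incident banana e x.
Proof. by rewrite /incident; case: (vertexP x) => ->. Qed.

Lemma other_end_banana e x : other_end banana e x = vflip x.
Proof. by rewrite /other_end; case: (vertexP x) => ->. Qed.

Lemma lap_banana z : lap banana z = [ffun x => #|E|%:Z * (z x - z (vflip x))].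
Proof.
apply/ffunP => x; rewrite !ffunE (eq_bigl predT) => [|e]; last exact: incident_banana.
rewrite (eq_bigr (fun _ => z x - z (vflip x))) => [|e _]; last by rewrite other_end_banana.
by rewrite sumr_const -mulr_natl -natz.
Qed.

Lemma lin_equiv_banana D D' :
  lin_equiv banana D D' <-> deg D = deg D' /\ (#|E|%:Z %| D vv - D' vv)%Z.
Proof.
rewrite !degE2; split=> [[z ->] | [eq_deg /dvdzP[q eq_q]]].
  rewrite lap_banana !ffunE /vflip /=; split; first ring.
  by apply/dvdzP; exists (z vv - z ww); ring.
exists [ffun y => if y == vv then q else 0].
apply/ffunP => y; rewrite lap_banana !ffunE.
by case: (vertexP y) => -> /=; rewrite ?subr0 ?sub0r ?mulrN ?opprK mulrC -eq_q; lra.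
Qed.

Lemma spanning_tree_banana T : spanning_tree banana T <-> exists t, T = [set t].
Proof.
rewrite /spanning_tree card_ord /=; split=> [/andP[/cards1P //] | [t ->]].
rewrite cards1 /=; apply/forallP => x; apply/forallP => y.
have [-> | neq_xy] := eqVneq x y; first exact: connect0.
have flip_x : vflip x = y by rewrite [y](@neq_vflip y x) // eq_sym.
apply/connect1/existsP; exists t.
by rewrite set11 incident_banana other_end_banana flip_x eqxx neq_xy.
Qed.

Lemma ribbon_wf_banana :
  ribbon_wf banana <-> forall x, uniq (rot x) /\ forall e, e \in rot x.
Proof.
split=> [[_ wf_rot] x | wf_rot].
  by have [uniq_rot mem_rot] := wf_rot x; split=> // e; rewrite mem_rot incident_banana.
split=> // x; have [uniq_rot mem_rot] := wf_rot x.
by split=> // e; rewrite mem_rot incident_banana.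
Qed.

Lemma iter_rsucc_card : ribbon_wf banana -> forall x e, iter #|E| (rsucc banana x) e = e.
Proof.
move=> /ribbon_wf_banana wf_rot x e; have [uniq_rot mem_rot] := wf_rot x.
have <- : size (rot x) = #|E|.
  by rewrite -(card_uniqP uniq_rot); apply: eq_card => e'; rewrite mem_rot.
exact: iter_next_size.
Qed.

Lemma rr_reach_banana u s s' : rr_reach banana u s s' ->
  exists j, s'.2 (vflip u) = iter j (rsucc banana (vflip u)) (s.2 (vflip u))
            /\ s'.1 (vflip u) + j%:Z = s.1 (vflip u).
Proof.
elim=> [s0 | s0 s1 s2 [x [neq_xu _ s1E]] _ [j [rotor_j chips_j]]].
  by exists 0%N; rewrite addr0.
move: s1E rotor_j chips_j; rewrite (neq_vflip neq_xu) /= => -> /=.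
rewrite !ffunE eqxx other_end_banana vflipK (negbTE (vflip_neq u)) => -> chips_j.
by exists j.+1; rewrite iterSr; split=> //; lia.
Qed.

Lemma rr_reach_banana_route u k (d : divisor 'I_2) (r : rotors 'I_2 E) :
  d (vflip u) = k%:Z ->
  exists d' r', [/\ rr_reach banana u (d, r) (d', r'), d' (vflip u) = 0 &
                    r' (vflip u) = iter k (rsucc banana (vflip u)) (r (vflip u))].
Proof.
elim: k d r => [|k IH] d r chips_k; first by exists d, r; split=> //; constructor.
set x := vflip u; set e := rsucc banana x (r x).
have [|d' [r' [reach chips' rotor']]] :=
  IH [ffun y => d y - (y == x)%:Z + (y == other_end banana e x)%:Z]
     [ffun y => if y == x then e else r y].
  rewrite !ffunE eqxx other_end_banana /x vflipK (negbTE (vflip_neq u)) chips_k; lia.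
exists d', r'; split=> //; last by rewrite rotor' ffunE eqxx iterSr.
apply: rr_trans reach; exists x; split; [exact: vflip_neq | by rewrite chips_k | by []].
Qed.

Lemma rr_torsor_banana u D t T' : ribbon_wf banana ->
  rr_torsor banana u D [set t] T' <->
  T' = [set iter `|(D (vflip u) %% #|E|)%Z|%N (rsucc banana (vflip u)) t].
Proof.
move=> wf; have E_gt0 : (0 < #|E|)%N by apply/card_gt0P; exists t.
have away_u : [set y | y != u] = [set vflip u].
  by apply/setP => y; rewrite !inE; apply/idP/eqP => [/neq_vflip | ->] //; apply: vflip_neq.
split.
  case=> D0 [rho0 [Dend [rhoend [[[z D0E] _] [tree_rho0 _] reach Dend0 ->]]]].
  have /andP[/set1P rho0_x _] := tree_rho0 _ (vflip_neq u).
  have [j [rotor_j chips_j]] := rr_reach_banana reach.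
  rewrite away_u imset_set1 rotor_j /= rho0_x (iter_modn (iter_rsucc_card wf _) j).
  have -> : D (vflip u) = (z (vflip u) - z u) * #|E| + j.
    move: chips_j; rewrite Dend0 ?vflip_neq // D0E lap_banana !ffunE vflipK; lia.
  by rewrite modzMDl modz_nat.
move=> ->; set q := (D (vflip u) %/ #|E|)%Z.
set z : {ffun 'I_2 -> int} := [ffun y => if y == vflip u then q else 0].
set D0 : divisor 'I_2 := [ffun y => D y - lap banana z y].
have D0_x : D0 (vflip u) = `|(D (vflip u) %% #|E|)%Z|%N%:Z.
  have E_neq0 : #|E|%:Z != 0 by lia.
  rewrite gez0_abs ?modz_ge0 // /D0 /z lap_banana !ffunE eqxx vflipK [u == _]eq_sym.
  rewrite (negbTE (vflip_neq u)) {1}(divz_eq (D (vflip u)) #|E|) -/q; ring.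
have [Dend [rhoend [reach Dend_x rhoend_x]]] := rr_reach_banana_route [ffun=> t] D0_x.
exists D0, [ffun=> t], Dend, rhoend; split=> //.
- by split=> [|y /neq_vflip ->]; [exists z | rewrite D0_x].
- split=> [y _ | y]; first by rewrite ffunE set11 incident_banana.
  have [-> | neq_yu] := eqVneq y u; first by exists 0%N.
  by exists 1%N; rewrite /= (negbTE neq_yu) other_end_banana (neq_vflip neq_yu) vflipK.
- by move=> y /neq_vflip ->.
- by rewrite away_u imset_set1 rhoend_x ffunE.
Qed.

Lemma bern_torsor_banana u e0 D t T' :
  deg D = 0 ->
  (forall t', deg (bdiv banana u e0 [set t']) = deg (bdiv banana u e0 [set t])) ->
  bern_torsor banana u e0 D [set t] T' <->
  exists2 t', T' = [set t'] &
    (#|E|%:Z %| bdiv banana u e0 [set t] vv + D vv - bdiv banana u e0 [set t'] vv)%Z.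
Proof.
move=> degD deg_bdiv; rewrite /bern_torsor.
split=> [[/spanning_tree_banana[t' ->] /lin_equiv_banana[_]] | [t' -> div_t']].
  by rewrite ffunE; exists t'.
split; first by apply/spanning_tree_banana; exists t'.
by apply/lin_equiv_banana; rewrite deg_add degD addr0 deg_bdiv ffunE.
Qed.

Lemma cyc_banana (s : seq (E * 'I_2)) n :
  (forall d, d \in s) -> (#|{: E * 'I_2}| <= n)%N ->
  cyc banana =
  size (undup [seq [seq d' <- s | d' \in traject (face_step banana) d n] | d <- s]).
Proof.
move=> s_full le_n; rewrite /cyc.
have dartsT : darts banana = setT by apply/setP => d; rewrite !inE incident_banana.
transitivity (size (undup [seq [set d' | fconnect (face_step banana) d d'] | d <- s])).
  apply/perm_size/uniq_perm; rewrite ?undup_uniq // => A; rewrite !mem_undup.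
  by apply/mapP/mapP => -[d _ ->]; exists d; rewrite ?mem_enum ?dartsT ?inE ?s_full.
apply: size_undup_map_eq => d1 d2 _ _; apply/eqP/eqP => [/setP orbits_eq | keys_eq].
  apply: eq_filter => d; move: (orbits_eq d).
  by rewrite !inE !(fconnect_traject _ _ _ le_n).
apply/setP => d; move: (congr1 (fun l => d \in l) keys_eq) => /=.
by rewrite !inE !mem_filter s_full !andbT !(fconnect_traject _ _ _ le_n).
Qed.
End Banana.

(* Unlike [inord], which goes through the opaque [idP], [edge i] reduces under [vm_compute]. *)
Definition edge (i : nat) : 'I_5 := Ordinal (ltn_pmod i (isT : 0 < 5)%N).

Lemma ed_edge i : (i < 5)%N -> ed i = edge i.
Proof. by move=> lt_i5; apply: val_inj; rewrite /= inordK // modn_small. Qed.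

Definition edges : seq 'I_5 := [seq edge i | i <- iota 0 5].
Definition vertices : seq 'I_2 := [:: vv; ww].

Lemma mem_edges e : e \in edges.
Proof.
apply/mapP; exists (val e); first by rewrite mem_iota ltn_ord.
by apply: val_inj; rewrite /= modn_small.
Qed.

Lemma mem_vertices x : x \in vertices.
Proof. by case: (vertexP x) => ->. Qed.

Lemma all_edgesP (P : pred 'I_5) : all P edges -> forall e, P e.
Proof. by move=> /allP all_P e; apply/all_P/mem_edges. Qed.

Lemma all_verticesP (P : pred 'I_2) : all P vertices -> forall x, P x.
Proof. by move=> /allP all_P x; apply/all_P/mem_vertices. Qed.

Definition rotG (x : 'I_2) : seq 'I_5 :=
  if x == vv then [:: edge 0; edge 1; edge 2; edge 3; edge 4]
  else [:: edge 0; edge 2; edge 1; edge 4; edge 3].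

Definition rotG' (x : 'I_2) : seq 'I_5 :=
  if x == vv then [:: edge 0; edge 3; edge 1; edge 4; edge 2]
  else [:: edge 0; edge 4; edge 2; edge 3; edge 1].

Lemma GpropE : Gprop = banana rotG. Proof. by rewrite /Gprop !ed_edge. Qed.
Lemma G'propE : G'prop = banana rotG'. Proof. by rewrite /G'prop !ed_edge. Qed.

Lemma ribbon_wf_rot rot :
  all (fun x => uniq (rot x) && all (mem (rot x)) edges) vertices -> ribbon_wf (banana rot).
Proof.
move=> wf_rot; apply/ribbon_wf_banana => x.
by have /andP[-> /all_edgesP] := all_verticesP wf_rot x.
Qed.

Lemma ribbon_wfG : ribbon_wf (banana rotG). Proof. exact: ribbon_wf_rot. Qed.
Lemma ribbon_wfG' : ribbon_wf (banana rotG'). Proof. exact: ribbon_wf_rot. Qed.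

Lemma rsuccG'_sqr x e :
  rsucc (banana rotG') x (rsucc (banana rotG') x e) = rsucc (banana rotG) x e.
Proof.
apply/eqP; move: e; apply/all_edgesP; move: x; apply/all_verticesP.
by vm_compute.
Qed.

Lemma iter_rsucc_double x (m : int) e :
  iter `|((2 * m) %% 5)%Z|%N (rsucc (banana rotG') x) e =
  iter `|(m %% 5)%Z|%N (rsucc (banana rotG) x) e.
Proof.
have periodic := iter_rsucc_card ribbon_wfG' x; rewrite card_ord in periodic.
have -> : `|((2 * m) %% 5)%Z|%N = ((`|(m %% 5)%Z| * 2) %% 5)%N by lia.
rewrite -iter_modn // iterM; apply: eq_iter => e'; exact: rsuccG'_sqr.
Qed.

Lemma dvdz5_double (a a' : int) : (5 %| a' - 2 * a)%Z -> (5 %| a)%Z = (5 %| a')%Z.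
Proof. by move=> div_a; apply/idP/idP; lia. Qed.

Definition all3 (P : 'I_2 -> 'I_5 -> 'I_5 -> bool) : bool :=
  all (fun u => all (fun e => all (P u e) edges) edges) vertices.

Lemma all3P P : all3 P -> forall u e e', P u e e'.
Proof. by move=> all_P u e; apply: all_edgesP (all_edgesP (all_verticesP all_P u) e). Qed.

(* Bernardi's tour of a single-edge tree passes exactly once through each of the 10 half-edges. *)
Definition tours_ok (rot : 'I_2 -> seq 'I_5) : bool := all3 (fun u e0 t =>
  let step := bstep1 (banana rot) t in
  (iter 10 step (e0, u) == (e0, u)) && uniq (traject step (e0, u) 10)).

Definition bchips (rot : 'I_2 -> seq 'I_5) u e0 t z : nat :=
  tour_chips (banana rot) t u e0 (traject (bstep1 (banana rot) t) (e0, u) 10) z.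

Lemma bdiv_bchips rot u e0 t z :
  tours_ok rot -> bdiv (banana rot) u e0 [set t] z = (bchips rot u e0 t z)%:Z.
Proof. by move=> /all3P/(_ u e0 t)/andP[/eqP closed uniq_tour]; apply: bdiv_set1. Qed.

Lemma tours_okG : tours_ok rotG. Proof. by vm_compute. Qed.
Lemma tours_okG' : tours_ok rotG'. Proof. by vm_compute. Qed.

Lemma bchips_deg :
  all3 (fun u e0 t => (bchips rotG u e0 t vv + bchips rotG u e0 t ww == 4)
                   && (bchips rotG' u e0 t vv + bchips rotG' u e0 t ww == 4))%N.
Proof. by vm_compute. Qed.

Lemma bchips_double :
  all3 (fun u e0 e0' =>
    let c t := (bchips rotG' u e0' t vv)%:Z - 2 * (bchips rotG u e0 t vv)%:Z in
    let c0 := c (edge 0) in all (fun t => 5 %| c t - c0)%Z edges).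
Proof. by vm_compute. Qed.

Lemma bchips_onto :
  all3 (fun u e0 k => has (fun t => (5 %| (bchips rotG u e0 t vv)%:Z - k%:Z)%Z) edges).
Proof. by vm_compute. Qed.

Lemma deg_bdiv u e0 t :
  deg (bdiv (banana rotG) u e0 [set t]) = 4 /\ deg (bdiv (banana rotG') u e0 [set t]) = 4.
Proof.
have /andP[/eqP degG /eqP degG'] := all3P bchips_deg u e0 t.
rewrite !degE2 !bdiv_bchips ?tours_okG ?tours_okG' //.
by split; rewrite -PoszD ?degG ?degG'.
Qed.

Lemma bdiv_shift_double u e0 e0' (d : int) t t' :
  (5%:Z %| bdiv (banana rotG) u e0 [set t] vv + d - bdiv (banana rotG) u e0 [set t'] vv)%Z =
  (5%:Z %| bdiv (banana rotG') u e0' [set t] vv + 2 * d - bdiv (banana rotG') u e0' [set t'] vv)%Z.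
Proof.
rewrite !bdiv_bchips ?tours_okG ?tours_okG' //; apply: dvdz5_double.
have := all_edgesP (all3P bchips_double u e0 e0') t.
by have := all_edgesP (all3P bchips_double u e0 e0') t' => /=; lia.
Qed.

Lemma bdiv_onto u e0 (k : int) : exists t, (5%:Z %| k - bdiv (banana rotG) u e0 [set t] vv)%Z.
Proof.
have /hasP[t _ div_t] := all3P bchips_onto u e0 (edge `|(k %% 5)%Z|).
by exists t; rewrite bdiv_bchips ?tours_okG //; move: div_t => /=; lia.
Qed.

Definition all_darts : seq ('I_5 * 'I_2) := [seq (e, x) | e <- edges, x <- vertices].

Lemma cyc_rot rot : cyc (banana rot) =
  size (undup [seq [seq d' <- all_darts | d' \in traject (face_step (banana rot)) d 10]
              | d <- all_darts]).
Proof.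
apply: cyc_banana; last by rewrite card_prod !card_ord.
by case=> e x; apply/allpairsP; exists (e, x); rewrite mem_edges mem_vertices.
Qed.

Lemma genusG : has_genus (banana rotG) 1.
Proof. by rewrite /has_genus cyc_rot !card_ord; vm_compute. Qed.

Lemma genusG' : has_genus (banana rotG') 2.
Proof. by rewrite /has_genus cyc_rot !card_ord; vm_compute. Qed.

Lemma phiE T : phi T = T.
Proof. by apply/setP => i; rewrite inE. Qed.

Lemma gamma_vv D : gamma D vv = 2 * D vv.
Proof. by rewrite ffunE. Qed.

Lemma gammaE D : deg D = 0 -> gamma D = [ffun x => 2 * D x].
Proof.
by rewrite degE2 => degD; apply/ffunP => x; rewrite !ffunE; case: (vertexP x) => -> /=; lra.
Qed.

Lemma rotor_routing_double u D t : deg D = 0 ->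
  (exists T', rr_torsor (banana rotG) u D [set t] T') /\
  (forall T', rr_torsor (banana rotG) u D [set t] T' <->
              rr_torsor (banana rotG') u (gamma D) [set t] T').
Proof.
move=> degD; rewrite gammaE //.
have rrG T' := rr_torsor_banana u D t T' ribbon_wfG.
have rrG' T' := rr_torsor_banana u [ffun x => 2 * D x] t T' ribbon_wfG'.
split=> [|T']; first by eexists; apply/rrG.
apply: iff_trans (rrG T') (iff_sym _).
by rewrite ffunE !card_ord iter_rsucc_double in rrG' *.
Qed.

Lemma bernardi_double u e0 e0' D t : deg D = 0 ->
  (exists T', bern_torsor (banana rotG) u e0 D [set t] T') /\
  (forall T', bern_torsor (banana rotG) u e0 D [set t] T' <->
              bern_torsor (banana rotG') u e0' (gamma D) [set t] T').
Proof.
move=> degD; have degD' : deg (gamma D) = 0.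
  by rewrite gammaE // degE2 !ffunE; move: degD; rewrite degE2; lra.
have degG t' : deg (bdiv (banana rotG) u e0 [set t']) = deg (bdiv (banana rotG) u e0 [set t]).
  by rewrite (deg_bdiv u e0 t').1 (deg_bdiv u e0 t).1.
have degG' t' : deg (bdiv (banana rotG') u e0' [set t']) = deg (bdiv (banana rotG') u e0' [set t]).
  by rewrite (deg_bdiv u e0' t').2 (deg_bdiv u e0' t).2.
have bernG T' := bern_torsor_banana T' degD degG.
have bernG' T' := bern_torsor_banana T' degD' degG'.
split=> [|T'].
  have [t' div_t'] := bdiv_onto u e0 (bdiv (banana rotG) u e0 [set t] vv + D vv).
  by exists [set t']; apply/bernG; exists t'; rewrite ?card_ord.
apply: iff_trans (bernG T') (iff_trans _ (iff_sym (bernG' T'))).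
rewrite !card_ord gamma_vv; split=> -[t' -> div_t']; exists t' => //.
  by rewrite -(bdiv_shift_double u e0 e0').
by rewrite (bdiv_shift_double u e0 e0').
Qed.

Theorem proposition3p4 :
  ribbon_wf Gprop /\ ribbon_wf G'prop /\
  (forall u : 'I_2,
     (forall (D : {ffun 'I_2 -> int}) (T : {set 'I_5}),
        deg D = 0 -> spanning_tree Gprop T ->
        (exists T', rr_torsor Gprop u D T T') /\
        (forall T', rr_torsor Gprop u D T T' <->
                    rr_torsor G'prop u (gamma D) (phi T) (phi T'))) /\
     (forall (e0 e0' : 'I_5), incident Gprop e0 u -> incident G'prop e0' u ->
      forall (D : {ffun 'I_2 -> int}) (T : {set 'I_5}),
        deg D = 0 -> spanning_tree Gprop T ->
        (exists T', bern_torsor Gprop u e0 D T T') /\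
        (forall T', bern_torsor Gprop u e0 D T T' <->
                    bern_torsor G'prop u e0' (gamma D) (phi T) (phi T')))) /\
  has_genus Gprop 1 /\ has_genus G'prop 2.
Proof.
rewrite GpropE G'propE; split; first exact: ribbon_wfG.
split; first exact: ribbon_wfG'.
split=> [u|]; last exact: (conj genusG genusG').
split=> [D T degD | e0 e0' _ _ D T degD] /spanning_tree_banana[t ->]; rewrite phiE.
  have [exists_rr double_rr] := rotor_routing_double u t degD.
  by split=> // T'; rewrite phiE.
have [exists_bern double_bern] := bernardi_double u e0 e0' t degD.
by split=> // T'; rewrite phiE.
Qed.
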